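(* Let $\Lambda=B(\mathbb Z^2)\subset\mathbb R^2$ be a Bravais lattice and let $f\colon\mathbb R\to\mathbb R$ be a non-negative, compactly supported function with $f(0)=0$ and $\sum_{u\in\Lambda\setminus\{0\}} f(\|u\|^2)<\infty$. Then, in the strong operator topology on bounded operators on $\ell^2(\Lambda)$, $W_f^N\to W_f$ and $L_f^N\to L_f$ as $N\to\infty$ through even integers.
   Context: The operator $W_f$ on $\ell^2(\Lambda)$ is $(W_f\psi)(v)=\sum_{u\in\Lambda,\,u\ne v} f(\|u-v\|^2)\psi(u)$, and $L_f=\big(\sum_{u\in\Lambda\setminus\{0\}}f(\|u\|^2)\big)\mathrm{Id}-W_f$. For an even integer $N$, let $\Lambda^N=\{B(i-N/2,\ j-N/2)^t: i,j\in\{0,1,\dots,N-1\}\}\subset\Lambda$ (an $N^2$-point truncation of $\Lambda$), and let $d$ denote the distance on $\Lambda^N$ after periodic identification of the boundaries, i.e. the distance in the torus $\mathbb R^2/B(N\mathbb Z^2)$. Define $W_f^N$ on $\ell^2(\Lambda^N)$ by $(W_f^N\psi)(v)=\sum_{u\in\Lambda^N,\,u\ne v} f(d^2(u,v))\psi(u)$, and $L_f^N$ by $(L_f^N\psi)(v)=\big[\sum_{u\in\Lambda^N\setminus\{0\}} f(d^2(u,0))\big]\psi(v)-(W_f^N\psi)(v)$ for $v\in\Lambda^N$. Both are extended to operators on $\ell^2(\Lambda)$ by applying them to the restriction of $\psi$ to $\Lambda^N$ and setting the output to $0$ at points $v\notin\Lambda^N$. *)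

From Stdlib Require Import Reals ZArith List Lia.
From Coquelicot Require Import Coquelicot.
Open Scope R_scope.

(* Points of Lambda are indexed by their integer
   coordinates a in Z^2 (u = B a); this is a bijection when det B <> 0. *)
Record mat2 := Mat2 { b11 : R; b12 : R; b21 : R; b22 : R }.

Definition det2 (B : mat2) : R := b11 B * b22 B - b12 B * b21 B.

Definition pt := (Z * Z)%type.

Definition zz_eqb (u v : pt) : bool :=
  (Z.eqb (fst u) (fst v) && Z.eqb (snd u) (snd v))%bool.

Definition zsub (u v : pt) : pt := ((fst u - fst v)%Z, (snd u - snd v)%Z).

Definition lat_norm2 (B : mat2) (a : pt) : R :=
  (b11 B * IZR (fst a) + b12 B * IZR (snd a)) ^ 2
  + (b21 B * IZR (fst a) + b22 B * IZR (snd a)) ^ 2.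

Definition sumlist (l : list pt) (g : pt -> R) : R :=
  fold_right (fun x acc => g x + acc) 0 l.

(* the box [-M, M]^2 of integer coordinates; infinite sums over Lambda are
   limits of sums over these exhausting boxes *)
Definition zrange (M : nat) : list Z :=
  map (fun k => (Z.of_nat k - Z.of_nat M)%Z) (seq 0 (2 * M + 1)).
Definition box (M : nat) : list pt := list_prod (zrange M) (zrange M).
Definition boxsum (M : nat) (g : pt -> R) : R := sumlist (box M) g.

Definition latsum (g : pt -> R) : R := real (Lim_seq (fun M => boxsum M g)).

Definition trunc1 (N : nat) : list Z :=
  map (fun i => (Z.of_nat i - Z.of_nat (N / 2))%Z) (seq 0 N).
Definition trunc (N : nat) : list pt := list_prod (trunc1 N) (trunc1 N).
Definition in_trunc (N : nat) (v : pt) : bool := existsb (zz_eqb v) (trunc N).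

(* squared distance in the torus R^2 / B(N Z^2) between B u and B v *)
Definition torus_d2 (B : mat2) (N : nat) (u v : pt) : R :=
  real (Glb_Rbar (fun r => exists k : pt,
    r = lat_norm2 B (((fst u - fst v) + Z.of_nat N * fst k)%Z,
                     ((snd u - snd v) + Z.of_nat N * snd k)%Z))).

Definition op := (pt -> R) -> (pt -> R).

Definition l2 (psi : pt -> R) : Prop :=
  exists C : R, forall M : nat, boxsum M (fun v => psi v ^ 2) <= C.

Definition W (B : mat2) (f : R -> R) : op := fun psi v =>
  latsum (fun u => if zz_eqb u v then 0 else f (lat_norm2 B (zsub u v)) * psi u).

Definition deg (B : mat2) (f : R -> R) : R :=
  latsum (fun u => if zz_eqb u (0%Z, 0%Z) then 0 else f (lat_norm2 B u)).

Definition L (B : mat2) (f : R -> R) : op := fun psi v =>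
  deg B f * psi v - W B f psi v.

(* W_f^N, extended by 0 outside Lambda^N *)
Definition WN (B : mat2) (f : R -> R) (N : nat) : op := fun psi v =>
  if in_trunc N v then
    sumlist (trunc N)
      (fun u => if zz_eqb u v then 0 else f (torus_d2 B N u v) * psi u)
  else 0.

Definition degN (B : mat2) (f : R -> R) (N : nat) : R :=
  sumlist (trunc N)
    (fun u => if zz_eqb u (0%Z, 0%Z) then 0 else f (torus_d2 B N u (0%Z, 0%Z))).

Definition LN (B : mat2) (f : R -> R) (N : nat) : op := fun psi v =>
  if in_trunc N v then degN B f N * psi v - WN B f N psi v else 0.

(* strong operator convergence T_N -> T as N -> oo through even integers:
   for every psi in l^2, || T_N psi - T psi ||_2^2 -> 0 *)
Definition strong_conv_even (T : nat -> op) (T0 : op) : Prop :=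
  forall psi : pt -> R, l2 psi ->
  forall eps : R, 0 < eps ->
  exists N0 : nat, forall N : nat, Nat.Even N -> (N0 <= N)%nat ->
  forall M : nat, boxsum M (fun v => (T N psi v - T0 psi v) ^ 2) <= eps.

From Stdlib Require Import Reals ZArith List Lia Lra Psatz Classical.
From Coquelicot Require Import Coquelicot.
Open Scope R_scope.

(* As f has compact support and det B <> 0, only the vectors w of a fixed box [-K, K]^2
   contribute: W_f psi (v) = sum_w f(|Bw|^2) psi (v + w).  For N = 2n with n > K two distinct
   translates of a short vector by B(N Z^2) are never both short, so f(d^2) = f(|.|^2) and
   W_f^N psi (v) is the same sum with v + w reduced into Lambda^N; both degrees equal
   F = sum_w f(|Bw|^2).  The two sums can only differ for v within K of the boundary of
   Lambda^N, and there Cauchy-Schwarz and a reindexing bound the squared l^2 distance by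
   4 F^2 times the mass of psi^2 outside the box of radius n - 2K, which tends to 0. *)

Definition lsum {A : Type} (l : list A) (g : A -> R) : R :=
  fold_right (fun x acc => g x + acc) 0 l.

Lemma sumlist_lsum (l : list pt) (g : pt -> R) : sumlist l g = lsum l g.
Proof. reflexivity. Qed.

Lemma sq_sub_le (x y : R) : (x - y) ^ 2 <= 2 * x ^ 2 + 2 * y ^ 2.
Proof. pose proof (pow2_ge_0 (x + y)). nra. Qed.

Section ListSum.
Context {A : Type}.
Implicit Types (l : list A) (g h : A -> R).

Lemma lsum_cons a l g : lsum (a :: l) g = g a + lsum l g.
Proof. reflexivity. Qed.

Lemma lsum_ext l g h : (forall x, In x l -> g x = h x) -> lsum l g = lsum l h.
Proof.
  induction l as [|a l IH]; intros H; [reflexivity|]. rewrite !lsum_cons.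
  rewrite H by (left; auto). rewrite IH; [reflexivity|]. intros; apply H; right; auto.
Qed.

Lemma lsum_le l g h : (forall x, In x l -> g x <= h x) -> lsum l g <= lsum l h.
Proof.
  induction l as [|a l IH]; intros H; [simpl; lra|]. rewrite !lsum_cons.
  apply Rplus_le_compat; [apply H; left; auto | apply IH; intros; apply H; right; auto].
Qed.

Lemma lsum_const0 l : lsum l (fun _ => 0) = 0.
Proof. induction l as [|a l IH]; [reflexivity|]. rewrite lsum_cons, IH. lra. Qed.

Lemma lsum_eq0 l g : (forall x, In x l -> g x = 0) -> lsum l g = 0.
Proof. intros H. rewrite (lsum_ext l g (fun _ => 0)) by auto. apply lsum_const0. Qed.

Lemma lsum_nonneg l g : (forall x, In x l -> 0 <= g x) -> 0 <= lsum l g.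
Proof. intros H. rewrite <- (lsum_const0 l). apply lsum_le; auto. Qed.

Lemma lsum_add l g h : lsum l (fun x => g x + h x) = lsum l g + lsum l h.
Proof. induction l as [|a l IH]; [simpl; lra|]. rewrite !lsum_cons, IH. lra. Qed.

Lemma lsum_sub l g h : lsum l (fun x => g x - h x) = lsum l g - lsum l h.
Proof. induction l as [|a l IH]; [simpl; lra|]. rewrite !lsum_cons, IH. lra. Qed.

Lemma lsum_scal l c g : lsum l (fun x => c * g x) = c * lsum l g.
Proof. induction l as [|a l IH]; [simpl; lra|]. rewrite !lsum_cons, IH. lra. Qed.

Lemma lsum_filter (P : A -> bool) l g :
  lsum (filter P l) g = lsum l (fun x => if P x then g x else 0).
Proof.
  induction l as [|a l IH]; [reflexivity|]. rewrite lsum_cons, <- IH. cbn [filter].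
  destruct (P a); [reflexivity | lra].
Qed.


Lemma lsum_Cauchy_Schwarz l (c a : A -> R) : (forall x, In x l -> 0 <= c x) ->
  lsum l (fun x => c x * a x) ^ 2 <= lsum l c * lsum l (fun x => c x * a x ^ 2).
Proof.
  induction l as [|a0 l IH]; intros Hc; [simpl; lra|]. rewrite !lsum_cons.
  assert (H0 : 0 <= c a0) by (apply Hc; left; auto).
  assert (HS : 0 <= lsum l c) by (apply lsum_nonneg; intros; apply Hc; right; auto).
  assert (HQ : 0 <= lsum l (fun x => c x * a x ^ 2)).
  { apply lsum_nonneg. intros x Hx. pose proof (pow2_ge_0 (a x)).
    assert (0 <= c x) by (apply Hc; right; auto). nra. }
  specialize (IH (fun x Hx => Hc x (or_intror Hx))).
  set (S := lsum l c) in *. set (T := lsum l (fun x => c x * a x)) in *.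
  set (Q := lsum l (fun x => c x * a x ^ 2)) in *.
  assert (Hcross : 2 * a a0 * T <= S * a a0 ^ 2 + Q).
  { destruct (Req_dec S 0) as [E|E].
    - rewrite E in IH |- *. assert (HT : T = 0) by (pose proof (pow2_ge_0 T); nra).
      rewrite HT. nra.
    - assert (0 <= S * (S * a a0 ^ 2 + Q - 2 * a a0 * T)).
      { replace (S * (S * a a0 ^ 2 + Q - 2 * a a0 * T))
          with ((S * a a0 - T) ^ 2 + (S * Q - T ^ 2)) by ring.
        pose proof (pow2_ge_0 (S * a a0 - T)). lra. }
      assert (0 < S) by lra. nra. }
  nra.
Qed.

Variable eq_dec : forall x y : A, {x = y} + {x <> y}.

Lemma lsum_remove l a h : NoDup l -> In a l -> lsum l h = h a + lsum (remove eq_dec a l) h.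
Proof.
  induction l as [|b l IH]; intros Hn Hi; [destruct Hi|]. inversion Hn; subst.
  simpl remove. destruct (eq_dec a b) as [->|Hab].
  - rewrite notin_remove by auto. reflexivity.
  - destruct Hi as [Hi|Hi]; [congruence|]. rewrite !lsum_cons, IH by auto. lra.
Qed.

Lemma NoDup_remove_elt l a : NoDup l -> NoDup (remove eq_dec a l).
Proof.
  induction l as [|b l IH]; intros Hn; simpl; auto. inversion Hn; subst.
  destruct (eq_dec a b); auto. constructor; auto. intros Hi. apply in_remove in Hi. tauto.
Qed.

Lemma lsum_incl_le l1 l2 h : NoDup l1 -> NoDup l2 -> incl l1 l2 ->
  (forall x, In x l2 -> 0 <= h x) -> lsum l1 h <= lsum l2 h.
Proof.
  revert l2; induction l1 as [|a l1 IH]; intros l2 H1 H2 Hi Hh.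
  - apply lsum_nonneg; auto.
  - inversion H1; subst. rewrite (lsum_remove l2 a h H2) by (apply Hi; left; auto).
    rewrite lsum_cons. apply Rplus_le_compat_l. apply IH; auto.
    + apply NoDup_remove_elt; auto.
    + intros x Hx. apply in_in_remove; [intros ->; auto | apply Hi; right; auto].
    + intros x Hx. apply in_remove in Hx. apply Hh; tauto.
Qed.

Lemma lsum_incl_eq l1 l2 h : NoDup l1 -> NoDup l2 -> incl l1 l2 ->
  (forall x, In x l2 -> ~ In x l1 -> h x = 0) -> lsum l2 h = lsum l1 h.
Proof.
  revert l2; induction l1 as [|a l1 IH]; intros l2 H1 H2 Hi Hh.
  - apply lsum_eq0. intros; apply Hh; auto.
  - inversion H1; subst. rewrite (lsum_remove l2 a h H2) by (apply Hi; left; auto).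
    rewrite lsum_cons. f_equal. apply IH; auto.
    + apply NoDup_remove_elt; auto.
    + intros x Hx. apply in_in_remove; [intros ->; auto | apply Hi; right; auto].
    + intros x Hx Hn. apply in_remove in Hx. apply Hh; [tauto|]. intros [E|E]; subst; tauto.
Qed.
End ListSum.

Lemma lsum_map {A C : Type} (phi : C -> A) (l : list C) (g : A -> R) :
  lsum (map phi l) g = lsum l (fun x => g (phi x)).
Proof. induction l as [|a l IH]; [reflexivity|]. cbn [map]. rewrite !lsum_cons, IH. lra. Qed.

Lemma lsum_exchange {A C : Type} (l : list A) (m : list C) (G : A -> C -> R) :
  lsum l (fun x => lsum m (G x)) = lsum m (fun y => lsum l (fun x => G x y)).
Proof.
  induction l as [|a l IH].
  - symmetry. apply lsum_const0.
  - rewrite lsum_cons, IH, <- lsum_add. apply lsum_ext. reflexivity.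
Qed.

Lemma lsum_reindex_le {A C : Type} (eq_dec : forall x y : A, {x = y} + {x <> y})
  (l : list C) (m : list A) (P : C -> bool) (phi : C -> A) (h : A -> R) :
  NoDup l -> NoDup m ->
  (forall x y, In x l -> In y l -> P x = true -> P y = true -> phi x = phi y -> x = y) ->
  (forall x, In x l -> P x = true -> In (phi x) m) -> (forall z, 0 <= h z) ->
  lsum l (fun x => if P x then h (phi x) else 0) <= lsum m h.
Proof.
  intros Hl Hm Hinj Hin Hh.
  rewrite <- (lsum_filter P l (fun x => h (phi x))), <- (lsum_map phi (filter P l) h). apply (lsum_incl_le eq_dec); auto.
  - apply NoDup_map_NoDup_ForallPairs; [|apply NoDup_filter; auto].
    intros x y Hx Hy. apply filter_In in Hx; apply filter_In in Hy. apply Hinj; tauto.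
  - intros z Hz. apply in_map_iff in Hz. destruct Hz as [x [<- Hx]].
    apply filter_In in Hx. apply Hin; tauto.
Qed.

Lemma pt_eq_dec : forall x y : pt, {x = y} + {x <> y}.
Proof. decide equality; apply Z.eq_dec. Qed.

Lemma zz_eqb_spec u v : zz_eqb u v = true <-> u = v.
Proof.
  destruct u as [a b], v as [c d]; unfold zz_eqb; simpl.
  rewrite Bool.andb_true_iff, !Z.eqb_eq.
  split; [intros [-> ->]; auto | intros H; inversion H; auto].
Qed.

Lemma NoDup_list_prod {A C : Type} (l : list A) (m : list C) :
  NoDup l -> NoDup m -> NoDup (list_prod l m).
Proof.
  induction l as [|a l IH]; intros Hl Hm; simpl; [constructor|]. inversion Hl; subst.
  apply NoDup_app; auto.
  - apply NoDup_map_NoDup_ForallPairs; auto. intros x y _ _ E; inversion E; auto.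
  - intros [x y] Hx Hy. apply in_map_iff in Hx. destruct Hx as [z [E _]]. inversion E; subst.
    apply in_prod_iff in Hy. tauto.
Qed.

Lemma in_zrange M z : In z (zrange M) <-> (- Z.of_nat M <= z <= Z.of_nat M)%Z.
Proof.
  unfold zrange. rewrite in_map_iff. split.
  - intros [k [E Hk]]. apply in_seq in Hk. lia.
  - intros H. exists (Z.to_nat (z + Z.of_nat M)). split; [lia|]. apply in_seq. lia.
Qed.

Lemma in_box M z : In z (box M) <->
  (Z.abs (fst z) <= Z.of_nat M)%Z /\ (Z.abs (snd z) <= Z.of_nat M)%Z.
Proof. destruct z; unfold box, pt; rewrite in_prod_iff, !in_zrange; simpl; lia. Qed.

Lemma NoDup_box M : NoDup (box M).
Proof.
  apply NoDup_list_prod;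
    (apply NoDup_map_NoDup_ForallPairs; [intros x y _ _ E; lia | apply seq_NoDup]).
Qed.

Definition in_cell (n : nat) (z : pt) : Prop :=
  (- Z.of_nat n <= fst z < Z.of_nat n)%Z /\ (- Z.of_nat n <= snd z < Z.of_nat n)%Z.

Lemma in_trunc1 n z : In z (trunc1 (2 * n)) <-> (- Z.of_nat n <= z < Z.of_nat n)%Z.
Proof.
  unfold trunc1. replace (2 * n / 2)%nat with n by (rewrite Nat.mul_comm, Nat.div_mul; lia).
  rewrite in_map_iff. split.
  - intros [k [E Hk]]. apply in_seq in Hk. lia.
  - intros H. exists (Z.to_nat (z + Z.of_nat n)). split; [lia|]. apply in_seq. lia.
Qed.

Lemma In_trunc n z : In z (trunc (2 * n)) <-> in_cell n z.
Proof. destruct z; unfold trunc, in_cell, pt; rewrite in_prod_iff, !in_trunc1; simpl; tauto. Qed.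

Lemma in_truncP n z : in_trunc (2 * n) z = true <-> in_cell n z.
Proof.
  unfold in_trunc. rewrite existsb_exists, <- In_trunc. split.
  - intros [x [Hx E]]. apply zz_eqb_spec in E. subst; auto.
  - intros H. exists z. split; auto. apply zz_eqb_spec; auto.
Qed.

Lemma NoDup_trunc n : NoDup (trunc n).
Proof.
  apply NoDup_list_prod;
    (apply NoDup_map_NoDup_ForallPairs; [intros x y _ _ E; lia | apply seq_NoDup]).
Qed.

Definition ptadd (v w : pt) : pt := ((fst v + fst w)%Z, (snd v + snd w)%Z).

(* Representative in [-n, n) of z modulo 2n; [wrap n] maps Z^2 onto the cell of Lambda^(2n). *)
Definition wrapZ (n z : Z) : Z := ((z + n) mod (2 * n) - n)%Z.
Definition wrap (n : Z) (p : pt) : pt := (wrapZ n (fst p), wrapZ n (snd p)).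

Section Wrap.
Variable n : Z.
Hypothesis n_pos : (0 < n)%Z.

Lemma wrapZ_range z : (- n <= wrapZ n z < n)%Z.
Proof. unfold wrapZ. pose proof (Z.mod_pos_bound (z + n) (2 * n)). lia. Qed.

Lemma wrapZ_periodic z k : wrapZ n (z + 2 * n * k) = wrapZ n z.
Proof.
  unfold wrapZ. replace (z + 2 * n * k + n)%Z with ((z + n) + k * (2 * n))%Z by ring.
  rewrite Z_mod_plus_full. reflexivity.
Qed.

Lemma wrapZ_id z : (- n <= z < n)%Z -> wrapZ n z = z.
Proof. intros. unfold wrapZ. rewrite Z.mod_small; lia. Qed.

Lemma wrapZ_shift z k : (- n <= z + 2 * n * k < n)%Z -> wrapZ n z = (z + 2 * n * k)%Z.
Proof. intros. rewrite <- wrapZ_periodic with (k := k). apply wrapZ_id. auto. Qed.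

Lemma wrapZ_congr z : exists k, wrapZ n z = (z + 2 * n * k)%Z.
Proof. exists (- ((z + n) / (2 * n)))%Z. unfold wrapZ. rewrite Z.mod_eq by lia. ring. Qed.

Lemma wrapZ_inj z1 z2 : (Z.abs (z1 - z2) < 2 * n)%Z -> wrapZ n z1 = wrapZ n z2 -> z1 = z2.
Proof.
  intros Hd E. destruct (wrapZ_congr z1) as [k1 E1], (wrapZ_congr z2) as [k2 E2].
  assert (Hk : (z1 - z2 = 2 * n * (k2 - k1))%Z) by lia.
  destruct (Z.eq_dec k2 k1); [lia|]. nia.
Qed.

Lemma wrap_inj p q : (Z.abs (fst p - fst q) < 2 * n)%Z -> (Z.abs (snd p - snd q) < 2 * n)%Z ->
  wrap n p = wrap n q -> p = q.
Proof.
  destruct p as [p1 p2], q as [q1 q2]; unfold wrap; simpl. intros H1 H2 E. inversion E.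
  f_equal; apply wrapZ_inj; auto.
Qed.
End Wrap.

Lemma lat_norm2_0 B : lat_norm2 B (0%Z, 0%Z) = 0.
Proof. unfold lat_norm2; simpl. ring. Qed.

(* Inverting B by Cramer's rule: det B * a = adj B * (B a), and each entry of adj B * x
   is at most |B|_F |x| by Cauchy-Schwarz. *)
Lemma lat_norm2_le_box B (R1 : R) : det2 B <> 0 ->
  exists K : nat, forall d : pt, lat_norm2 B d <= R1 -> In d (box K).
Proof.
  intros hB.
  set (S := b11 B ^ 2 + b12 B ^ 2 + b21 B ^ 2 + b22 B ^ 2).
  set (Q := S * R1 / det2 B ^ 2).
  exists (Z.to_nat (up Q)). intros [d1 d2] Hd. apply in_box. simpl.
  unfold lat_norm2 in Hd; simpl in Hd.
  set (a1 := IZR d1) in *. set (a2 := IZR d2) in *.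
  set (x := b11 B * a1 + b12 B * a2) in *. set (y := b21 B * a1 + b22 B * a2) in *.
  assert (HD : 0 < det2 B ^ 2) by (apply pow2_gt_0; auto).
  assert (E1 : det2 B * a1 = b22 B * x - b12 B * y) by (unfold det2, x, y; ring).
  assert (E2 : det2 B * a2 = b11 B * y - b21 B * x) by (unfold det2, x, y; ring).
  assert (C1 : (b22 B * x - b12 B * y) ^ 2 <= S * (x ^ 2 + y ^ 2)).
  { pose proof (pow2_ge_0 (b22 B * y + b12 B * x)).
    assert (0 <= (b11 B ^ 2 + b21 B ^ 2) * (x ^ 2 + y ^ 2)) by nra. unfold S. nra. }
  assert (C2 : (b11 B * y - b21 B * x) ^ 2 <= S * (x ^ 2 + y ^ 2)).
  { pose proof (pow2_ge_0 (b11 B * x + b21 B * y)).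
    assert (0 <= (b12 B ^ 2 + b22 B ^ 2) * (x ^ 2 + y ^ 2)) by nra. unfold S. nra. }
  assert (HS : 0 <= S) by (unfold S; nra).
  assert (Hb : forall a, (det2 B * a) ^ 2 <= S * R1 -> a ^ 2 <= Q).
  { intros a Ha. unfold Q. apply Rmult_le_reg_l with (det2 B ^ 2); auto.
    replace (det2 B ^ 2 * (S * R1 / det2 B ^ 2)) with (S * R1) by (field; auto). nra. }
  assert (Q1 : a1 ^ 2 <= Q) by (apply Hb; rewrite E1; nra).
  assert (Q2 : a2 ^ 2 <= Q) by (apply Hb; rewrite E2; nra).
  assert (Habs : forall z : Z, IZR (Z.abs z) <= IZR z ^ 2).
  { intros z. replace (IZR z ^ 2) with (IZR (z * z)) by (rewrite mult_IZR; ring).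
    apply IZR_le. nia. }
  destruct (archimed Q) as [HQ _].
  assert (A1 : (Z.abs d1 < up Q)%Z) by (apply lt_IZR; pose proof (Habs d1); unfold a1 in *; lra).
  assert (A2 : (Z.abs d2 < up Q)%Z) by (apply lt_IZR; pose proof (Habs d2); unfold a2 in *; lra).
  lia.
Qed.

Lemma Glb_Rbar_between (E : R -> Prop) x0 a : E x0 -> (forall e, E e -> a <= e) ->
  a <= real (Glb_Rbar E) <= x0.
Proof.
  intros H0 Ha. destruct (Glb_Rbar_correct E) as [Hlb Hg].
  assert (L1 := Hlb x0 H0).
  assert (L2 : Rbar_le a (Glb_Rbar E)) by (apply Hg; intros x Hx; apply Ha; auto).
  destruct (Glb_Rbar E); simpl in *; try contradiction; lra.
Qed.

Lemma Glb_Rbar_min (E : R -> Prop) x0 : E x0 -> (forall e, E e -> x0 <= e) ->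
  real (Glb_Rbar E) = x0.
Proof. intros H0 Ha. pose proof (Glb_Rbar_between E x0 x0 H0 Ha). lra. Qed.

Definition torus_shift (N : nat) (u v k : pt) : pt :=
  ((fst u - fst v + Z.of_nat N * fst k)%Z, (snd u - snd v + Z.of_nat N * snd k)%Z).

Lemma torus_d2_shift B N u v :
  torus_d2 B N u v = real (Glb_Rbar (fun r => exists k, r = lat_norm2 B (torus_shift N u v k))).
Proof. reflexivity. Qed.

Section Locality.
Variables (B : mat2) (f : R -> R) (R1 : R) (K : nat).
Hypothesis short_in_box : forall d : pt, lat_norm2 B d <= R1 -> In d (box K).
Hypothesis f_vanish : forall y, R1 <= y -> f y = 0.
Hypothesis f0 : f 0 = 0.

Lemma f_outside_box d : ~ In d (box K) -> f (lat_norm2 B d) = 0.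
Proof.
  intros Hd. apply f_vanish. destruct (Rle_or_lt R1 (lat_norm2 B d)); auto.
  exfalso. apply Hd, short_in_box. lra.
Qed.

(* Two distinct shifts differ by at least 2n > 2K in some coordinate, so at most one of
   them is short: the torus distance is then the ordinary one, up to values killed by f. *)
Lemma f_torus_d2_repr n u v k0 : (K < n)%nat -> In (torus_shift (2 * n) u v k0) (box K) ->
  f (torus_d2 B (2 * n) u v) = f (lat_norm2 B (torus_shift (2 * n) u v k0)).
Proof.
  intros Hn Hw. rewrite torus_d2_shift.
  set (w := torus_shift (2 * n) u v k0) in *.
  assert (Hel : forall k, lat_norm2 B (torus_shift (2 * n) u v k) = lat_norm2 B w \/
                          R1 < lat_norm2 B (torus_shift (2 * n) u v k)).
  { intros k. destruct (pt_eq_dec k k0) as [->|Hk]; [left; reflexivity|].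
    right. destruct (Rle_or_lt (lat_norm2 B (torus_shift (2 * n) u v k)) R1) as [Hs|]; auto.
    apply short_in_box, in_box in Hs. apply in_box in Hw.
    unfold w, torus_shift in *; simpl in *.
    destruct (Z.eq_dec (fst k) (fst k0)); [destruct (Z.eq_dec (snd k) (snd k0))|].
    - destruct k, k0; simpl in *; congruence.
    - nia.
    - nia. }
  assert (Hmem : exists k, lat_norm2 B w = lat_norm2 B (torus_shift (2 * n) u v k))
    by (exists k0; reflexivity).
  destruct (Rle_or_lt (lat_norm2 B w) R1) as [Hs|Hs].
  - rewrite (Glb_Rbar_min _ (lat_norm2 B w)); auto.
    intros e [k ->]. destruct (Hel k); lra.
  - rewrite !f_vanish; auto; [lra|].
    apply (Glb_Rbar_between _ (lat_norm2 B w)); auto.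
    intros e [k ->]. destruct (Hel k); lra.
Qed.

Lemma f_torus_d2_far N u v : (forall k, ~ In (torus_shift N u v k) (box K)) ->
  f (torus_d2 B N u v) = 0.
Proof.
  intros Hk. rewrite torus_d2_shift. apply f_vanish.
  apply (Glb_Rbar_between _ (lat_norm2 B (torus_shift N u v (0%Z, 0%Z)))).
  - exists (0%Z, 0%Z). reflexivity.
  - intros e [k ->]. destruct (Rle_or_lt R1 (lat_norm2 B (torus_shift N u v k))); auto.
    exfalso. apply (Hk k), short_in_box. lra.
Qed.

Lemma W_box v (g : pt -> R) :
  latsum (fun u => if zz_eqb u v then 0 else f (lat_norm2 B (zsub u v)) * g u)
  = lsum (box K) (fun w => f (lat_norm2 B w) * g (ptadd v w)).
Proof.
  unfold latsum. set (c := lsum (box K) (fun w => f (lat_norm2 B w) * g (ptadd v w))).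
  rewrite (Lim_seq_ext_loc _ (fun _ => c)), Lim_seq_const; [reflexivity|].
  exists (K + Z.to_nat (Z.abs (fst v)) + Z.to_nat (Z.abs (snd v)))%nat. intros M HM.
  unfold boxsum. rewrite sumlist_lsum.
  rewrite (lsum_incl_eq pt_eq_dec (map (ptadd v) (box K))).
  - rewrite lsum_map. apply lsum_ext. intros w Hw.
    destruct (zz_eqb (ptadd v w) v) eqn:E.
    + apply zz_eqb_spec in E. unfold ptadd in E. destruct v, w; simpl in *. inversion E.
      replace z1 with 0%Z by lia. replace z2 with 0%Z by lia. rewrite lat_norm2_0, f0. ring.
    + do 3 f_equal. unfold zsub, ptadd. destruct v, w; simpl. f_equal; ring.
  - apply NoDup_map_NoDup_ForallPairs; [|apply NoDup_box].
    intros x y _ _ E. unfold ptadd in E. destruct x, y, v; simpl in *. inversion E. f_equal; lia.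
  - apply NoDup_box.
  - intros u Hu. apply in_map_iff in Hu. destruct Hu as [w [<- Hw]]. rewrite in_box in *.
    destruct v, w; simpl in *. lia.
  - intros u Hu Hn. destruct (zz_eqb u v); [reflexivity|].
    rewrite f_outside_box; [ring|]. intros Hd. apply Hn, in_map_iff.
    exists (zsub u v). split; auto. unfold ptadd, zsub; destruct u, v; simpl; f_equal; ring.
Qed.

Lemma WN_term_wrap n v w (g : pt -> R) : (K < n)%nat -> in_cell n v -> In w (box K) ->
  (if zz_eqb (wrap (Z.of_nat n) (ptadd v w)) v then 0
   else f (torus_d2 B (2 * n) (wrap (Z.of_nat n) (ptadd v w)) v) * g (wrap (Z.of_nat n) (ptadd v w)))
  = f (lat_norm2 B w) * g (wrap (Z.of_nat n) (ptadd v w)).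
Proof.
  intros Hn Hv Hw. set (nz := Z.of_nat n). assert (Hn0 : (0 < nz)%Z) by (unfold nz; lia).
  apply in_box in Hw.
  destruct v as [v1 v2], w as [w1 w2]. unfold in_cell in Hv; simpl in *.
  destruct (zz_eqb (wrap nz (ptadd (v1, v2) (w1, w2))) (v1, v2)) eqn:E.
  - apply zz_eqb_spec in E.
    assert (Ew : ptadd (v1, v2) (w1, w2) = (v1, v2)).
    { apply (wrap_inj nz Hn0); [unfold nz, ptadd in *; cbn [fst snd]; lia .. |].
      rewrite E. unfold wrap; simpl. rewrite !wrapZ_id by (unfold nz; lia). reflexivity. }
    unfold ptadd in Ew; simpl in Ew. inversion Ew.
    replace w1 with 0%Z by lia. replace w2 with 0%Z by lia. rewrite lat_norm2_0, f0. ring.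
  - apply Rmult_eq_compat_r. destruct (wrapZ_congr nz Hn0 (v1 + w1)) as [ka Ea].
    destruct (wrapZ_congr nz Hn0 (v2 + w2)) as [kb Eb].
    assert (Hshift : torus_shift (2 * n) (wrap nz (ptadd (v1, v2) (w1, w2))) (v1, v2)
                       ((- ka)%Z, (- kb)%Z) = (w1, w2)).
    { unfold torus_shift, wrap, ptadd. cbn [fst snd]. rewrite Ea, Eb. unfold nz.
      replace (Z.of_nat (2 * n)) with (2 * Z.of_nat n)%Z by lia. f_equal; ring. }
    rewrite (f_torus_d2_repr n _ _ ((- ka)%Z, (- kb)%Z)), Hshift; auto.
    rewrite Hshift. apply in_box. auto.
Qed.

Lemma WN_box n v (g : pt -> R) : (K < n)%nat -> in_cell n v ->
  sumlist (trunc (2 * n)) (fun u => if zz_eqb u v then 0 else f (torus_d2 B (2 * n) u v) * g u)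
  = lsum (box K) (fun w => f (lat_norm2 B w) * g (wrap (Z.of_nat n) (ptadd v w))).
Proof.
  intros Hn Hv. set (nz := Z.of_nat n). assert (Hn0 : (0 < nz)%Z) by (unfold nz; lia).
  rewrite sumlist_lsum.
  rewrite (lsum_incl_eq pt_eq_dec (map (fun w => wrap nz (ptadd v w)) (box K))).
  - rewrite lsum_map. apply lsum_ext. intros w Hw. apply WN_term_wrap; auto.
  - apply NoDup_map_NoDup_ForallPairs; [|apply NoDup_box].
    intros x y Hx Hy E. apply in_box in Hx; apply in_box in Hy.
    apply (wrap_inj nz Hn0) in E; [|unfold nz, ptadd in *; cbn [fst snd] in *; lia ..].
    destruct x, y, v; unfold ptadd in E; simpl in *. inversion E. f_equal; lia.
  - apply NoDup_trunc.
  - intros u Hu. apply in_map_iff in Hu. destruct Hu as [w [<- Hw]]. apply In_trunc.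
    unfold in_cell, wrap; cbn [fst snd]. pose proof (wrapZ_range nz Hn0 (fst (ptadd v w))).
    pose proof (wrapZ_range nz Hn0 (snd (ptadd v w))). unfold nz in *. lia.
  - intros u Hu Hni. destruct (zz_eqb u v); [reflexivity|].
    rewrite f_torus_d2_far; [ring|]. intros k Hk. apply Hni, in_map_iff.
    exists (torus_shift (2 * n) u v k). split; auto.
    apply In_trunc in Hu. unfold in_cell in Hu.
    destruct u as [u1 u2], v as [v1 v2], k as [k1 k2].
    unfold wrap, ptadd, torus_shift in *; cbn [fst snd] in *.
    replace (Z.of_nat (2 * n)) with (2 * nz)%Z in * by (unfold nz; lia).
    f_equal; [rewrite (wrapZ_shift nz _ (- k1)) | rewrite (wrapZ_shift nz _ (- k2))];
      unfold nz in *; lia.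
Qed.
End Locality.

Definition far (t : Z) (z : pt) : bool := (t <=? Z.abs (fst z))%Z || (t <=? Z.abs (snd z))%Z.

Lemma farP t z : far t z = true <-> (t <= Z.abs (fst z) \/ t <= Z.abs (snd z))%Z.
Proof. unfold far. rewrite Bool.orb_true_iff, !Z.leb_le. tauto. Qed.

Definition tailsum (psi : pt -> R) (t : Z) (M : nat) : R :=
  boxsum M (fun z => if far t z then psi z ^ 2 else 0).

(* The box sums of psi^2 increase to their supremum S; once a box M1 captures S - eps,
   everything outside it, in particular every far point, carries at most eps. *)
Lemma l2_tailsum_small psi : l2 psi -> forall eps, 0 < eps ->
  exists t0 : Z, forall t, (t0 <= t)%Z -> forall M, tailsum psi t M <= eps.
Proof.
  intros [C HC] eps Heps.
  set (E := fun x => exists M, x = boxsum M (fun v => psi v ^ 2)).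
  destruct (completeness E) as [S [HS1 HS2]].
  { exists C. intros x [M ->]. auto. }
  { exists (boxsum 0 (fun v => psi v ^ 2)), 0%nat. reflexivity. }
  destruct (classic (exists M1, S - eps < boxsum M1 (fun v => psi v ^ 2))) as [[M1 HM1]|Hno].
  2:{ exfalso. assert (S <= S - eps); [|lra]. apply HS2. intros x [M ->].
      apply Rnot_lt_le. intro; apply Hno; eauto. }
  exists (Z.of_nat M1 + 1)%Z. intros t Ht M.
  set (M2 := Nat.max M M1).
  assert (HM2 : boxsum M2 (fun v => psi v ^ 2) <= S) by (apply HS1; exists M2; auto).
  set (inner := fun z => if in_dec pt_eq_dec z (box M1) then psi z ^ 2 else 0).
  set (outer := fun z => if in_dec pt_eq_dec z (box M1) then 0 else psi z ^ 2).
  assert (Houter_nonneg : forall z, 0 <= outer z).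
  { intros z. unfold outer. destruct (in_dec _ _ _); [lra | apply pow2_ge_0]. }
  assert (Hsplit : boxsum M2 (fun v => psi v ^ 2) = lsum (box M2) inner + lsum (box M2) outer).
  { rewrite <- lsum_add. apply lsum_ext. intros z _.
    unfold inner, outer. destruct (in_dec _ _ _); ring. }
  assert (Hinner : lsum (box M2) inner = boxsum M1 (fun v => psi v ^ 2)).
  { rewrite (lsum_incl_eq pt_eq_dec (box M1)); try apply NoDup_box.
    - apply lsum_ext. intros z Hz. unfold inner. destruct (in_dec _ _ _); tauto.
    - intros z Hz. rewrite in_box in *. unfold M2. lia.
    - intros z _ Hz. unfold inner. destruct (in_dec _ _ _); tauto. }
  assert (Htail : tailsum psi t M <= lsum (box M2) outer).
  { apply Rle_trans with (lsum (box M) outer).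
    - apply lsum_le. intros z _. specialize (Houter_nonneg z).
      destruct (far t z) eqn:Ef; [|auto]. unfold outer in *.
      destruct (in_dec _ _ _) as [Hz|]; [|lra].
      apply farP in Ef. apply in_box in Hz. lia.
    - apply (lsum_incl_le pt_eq_dec); try apply NoDup_box; auto.
      intros z Hz. rewrite in_box in *. unfold M2. lia. }
  lra.
Qed.

Lemma strong_conv_even_of_tail_bound (T : nat -> op) (T0 : op) (K : nat) (C : R) :
  0 <= C ->
  (forall psi n tau, (K < n)%nat ->
     (forall M, tailsum psi (Z.of_nat n - 2 * Z.of_nat K) M <= tau) ->
     forall M, boxsum M (fun v => (T (2 * n)%nat psi v - T0 psi v) ^ 2) <= C * tau) ->
  strong_conv_even T T0.
Proof.
  intros HC Hbound psi Hpsi eps Heps.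
  set (tau := eps / (C + 1)).
  assert (Htau : 0 < tau) by (unfold tau; apply Rdiv_lt_0_compat; lra).
  destruct (l2_tailsum_small psi Hpsi tau Htau) as [t0 Ht0].
  exists (2 * (3 * K + 1 + Z.to_nat t0))%nat. intros N [m ->] HN M.
  apply Rle_trans with (C * tau).
  - apply Hbound; [lia|]. intros M'. apply Ht0. lia.
  - apply Rle_trans with ((C + 1) * tau).
    + apply Rmult_le_compat_r; lra.
    + right. unfold tau. field. lra.
Qed.

Section Convergence.
Variables (B : mat2) (f : R -> R) (R1 : R) (K : nat).
Hypothesis short_in_box : forall d : pt, lat_norm2 B d <= R1 -> In d (box K).
Hypothesis f_vanish : forall y, R1 <= y -> f y = 0.
Hypothesis f0 : f 0 = 0.
Hypothesis f_nonneg : forall x, 0 <= f x.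

Definition fmass : R := lsum (box K) (fun w => f (lat_norm2 B w)).

Lemma fmass_nonneg : 0 <= fmass.
Proof. apply lsum_nonneg; auto. Qed.

Lemma deg_fmass : deg B f = fmass.
Proof.
  unfold deg.
  transitivity (latsum (fun u => if zz_eqb u (0%Z, 0%Z) then 0
                                 else f (lat_norm2 B (zsub u (0%Z, 0%Z))) * 1)).
  { unfold latsum. f_equal. apply Lim_seq_ext. intros M. apply lsum_ext. intros [a b] _.
    destruct (zz_eqb (a, b) (0%Z, 0%Z)); [ring|]. unfold zsub; simpl. rewrite !Z.sub_0_r. ring. }
  rewrite (W_box B f R1 K short_in_box f_vanish f0 _ (fun _ => 1)).
  apply lsum_ext. intros; ring.
Qed.

Lemma degN_fmass n : (K < n)%nat -> degN B f (2 * n) = fmass.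
Proof.
  intros Hn. unfold degN.
  transitivity (sumlist (trunc (2 * n)) (fun u => if zz_eqb u (0%Z, 0%Z) then 0
                         else f (torus_d2 B (2 * n) u (0%Z, 0%Z)) * 1)).
  { apply lsum_ext. intros; destruct (zz_eqb x (0%Z, 0%Z)); ring. }
  rewrite (WN_box B f R1 K short_in_box f_vanish f0 _ _ (fun _ => 1)) by (unfold in_cell; simpl; lia).
  apply lsum_ext. intros; ring.
Qed.

(* Points v at which the neighbourhood v + box K does not wrap around the torus. *)
Definition interior (n : nat) (v : pt) : bool :=
  (Z.abs (fst v) <? Z.of_nat n - Z.of_nat K)%Z && (Z.abs (snd v) <? Z.of_nat n - Z.of_nat K)%Z.

Definition wrap_defect (n : nat) (psi : pt -> R) (v w : pt) : R :=
  (if in_trunc (2 * n) v then psi (wrap (Z.of_nat n) (ptadd v w)) else 0) - psi (ptadd v w).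

Lemma WN_sub_W n psi v : (K < n)%nat ->
  WN B f (2 * n) psi v - W B f psi v
  = lsum (box K) (fun w => f (lat_norm2 B w) * wrap_defect n psi v w).
Proof.
  intros Hn. unfold WN, W, wrap_defect.
  rewrite (W_box B f R1 K short_in_box f_vanish f0).
  destruct (in_trunc (2 * n) v) eqn:E.
  - rewrite (WN_box B f R1 K short_in_box f_vanish f0) by (auto; apply in_truncP; auto).
    rewrite <- lsum_sub. apply lsum_ext. intros; ring.
  - replace 0 with (lsum (box K) (fun _ => 0)) at 1 by apply lsum_const0.
    rewrite <- lsum_sub. apply lsum_ext. intros; ring.
Qed.

Definition defect_bound (n : nat) (psi : pt -> R) (v w : pt) : R :=
  if interior n v then 0
  else 2 * (if in_trunc (2 * n) v then psi (wrap (Z.of_nat n) (ptadd v w)) ^ 2 else 0)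
       + 2 * psi (ptadd v w) ^ 2.

Lemma wrap_defect_sq_le n psi v w : In w (box K) ->
  wrap_defect n psi v w ^ 2 <= defect_bound n psi v w.
Proof.
  intros Hw. unfold wrap_defect, defect_bound. destruct (interior n v) eqn:Ei.
  - unfold interior in Ei. rewrite Bool.andb_true_iff, !Z.ltb_lt in Ei. apply in_box in Hw.
    assert (Hv : in_trunc (2 * n) v = true) by (apply in_truncP; unfold in_cell; lia).
    rewrite Hv. replace (wrap (Z.of_nat n) (ptadd v w)) with (ptadd v w); [right; ring|].
    destruct v, w; unfold wrap, ptadd; simpl in *. rewrite !wrapZ_id by lia. reflexivity.
  - pose proof (sq_sub_le (if in_trunc (2 * n) v then psi (wrap (Z.of_nat n) (ptadd v w)) else 0)
                          (psi (ptadd v w))).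
    destruct (in_trunc (2 * n) v); [lra | simpl in *; lra].
Qed.

Lemma far_of_not_interior n v w : interior n v = false -> In w (box K) ->
  far (Z.of_nat n - 2 * Z.of_nat K) (ptadd v w) = true.
Proof.
  intros Ei Hw. apply farP. apply in_box in Hw.
  unfold interior in Ei. rewrite Bool.andb_false_iff, !Z.ltb_ge in Ei.
  destruct v, w; unfold ptadd; cbn [fst snd] in *. lia.
Qed.

Lemma far_wrap_of_not_interior n v w : (K < n)%nat -> in_cell n v -> interior n v = false ->
  In w (box K) -> far (Z.of_nat n - 2 * Z.of_nat K) (wrap (Z.of_nat n) (ptadd v w)) = true.
Proof.
  intros Hn Hv Ei Hw. apply farP. apply in_box in Hw.
  unfold interior in Ei. rewrite Bool.andb_false_iff, !Z.ltb_ge in Ei.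
  assert (Hc : forall a b, (- Z.of_nat n <= a < Z.of_nat n)%Z ->
             (Z.of_nat n - Z.of_nat K <= Z.abs a)%Z -> (Z.abs b <= Z.of_nat K)%Z ->
             (Z.of_nat n - 2 * Z.of_nat K <= Z.abs (wrapZ (Z.of_nat n) (a + b)))%Z).
  { intros a b Ha Hab Hb.
    destruct (Z_lt_le_dec (a + b) (- Z.of_nat n));
      [|destruct (Z_lt_le_dec (a + b) (Z.of_nat n))].
    - rewrite (wrapZ_shift _ _ 1) by lia. lia.
    - rewrite wrapZ_id by lia. lia.
    - rewrite (wrapZ_shift _ _ (-1)) by lia. lia. }
  destruct v, w; unfold in_cell, wrap, ptadd in *; cbn [fst snd] in *.
  destruct Ei as [Ei|Ei]; [left|right]; apply Hc; lia.
Qed.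

Lemma wrapped_column_le n psi w M : (K < n)%nat -> In w (box K) ->
  lsum (box M) (fun v => if (negb (interior n v) && in_trunc (2 * n) v)%bool
                         then psi (wrap (Z.of_nat n) (ptadd v w)) ^ 2 else 0)
  <= tailsum psi (Z.of_nat n - 2 * Z.of_nat K) n.
Proof.
  intros Hn Hw. set (t := (Z.of_nat n - 2 * Z.of_nat K)%Z). set (nz := Z.of_nat n).
  assert (Hn0 : (0 < nz)%Z) by (unfold nz; lia).
  apply Rle_trans with
    (lsum (box M) (fun v => if (negb (interior n v) && in_trunc (2 * n) v)%bool
       then (fun z => if far t z then psi z ^ 2 else 0) (wrap nz (ptadd v w)) else 0)).
  { apply lsum_le. intros v _. destruct (interior n v) eqn:Ei; [simpl; lra|].
    destruct (in_trunc (2 * n) v) eqn:Et; [|simpl; lra]. cbn beta.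
    assert (far t (wrap nz (ptadd v w)) = true) as ->
      by (apply far_wrap_of_not_interior; auto; apply in_truncP; auto).
    simpl; lra. }
  apply (lsum_reindex_le pt_eq_dec (box M) (box n) _ (fun v => wrap nz (ptadd v w))
           (fun z => if far t z then psi z ^ 2 else 0)); try apply NoDup_box.
  - intros x y _ _ Px Py Exy. rewrite Bool.andb_true_iff, in_truncP in Px, Py.
    destruct Px as [_ Px], Py as [_ Py].
    apply (wrap_inj nz Hn0) in Exy; [|unfold in_cell, nz, ptadd in *; cbn [fst snd]; lia ..].
    destruct x, y, w; unfold ptadd in Exy; cbn [fst snd] in *. inversion Exy. f_equal; lia.
  - intros x _ _. apply in_box. unfold wrap. cbn [fst snd].
    pose proof (wrapZ_range nz Hn0 (fst (ptadd x w))).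
    pose proof (wrapZ_range nz Hn0 (snd (ptadd x w))). unfold nz in *. lia.
  - intros z. destruct (far t z); [apply pow2_ge_0 | lra].
Qed.

Lemma shifted_column_le n psi w M : In w (box K) ->
  lsum (box M) (fun v => if negb (interior n v) then psi (ptadd v w) ^ 2 else 0)
  <= tailsum psi (Z.of_nat n - 2 * Z.of_nat K) (M + K).
Proof.
  intros Hw. set (t := (Z.of_nat n - 2 * Z.of_nat K)%Z).
  apply Rle_trans with
    (lsum (box M) (fun v => if negb (interior n v)
       then (fun z => if far t z then psi z ^ 2 else 0) (ptadd v w) else 0)).
  { apply lsum_le. intros v _. destruct (interior n v) eqn:Ei; [simpl; lra|].
    cbn beta. assert (far t (ptadd v w) = true) as -> by (apply far_of_not_interior; auto).
    simpl; lra. }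
  apply (lsum_reindex_le pt_eq_dec (box M) (box (M + K)) _ (fun v => ptadd v w)
           (fun z => if far t z then psi z ^ 2 else 0)); try apply NoDup_box.
  - intros x y _ _ _ _ Exy. destruct x, y, w; unfold ptadd in Exy; cbn [fst snd] in Exy.
    inversion Exy. f_equal; lia.
  - intros x Hx _. rewrite in_box in *. destruct x, w; unfold ptadd; cbn [fst snd] in *. lia.
  - intros z. destruct (far t z); [apply pow2_ge_0 | lra].
Qed.

Lemma LN_sub_L n psi v : (K < n)%nat ->
  LN B f (2 * n) psi v - L B f psi v =
  fmass * ((if in_trunc (2 * n) v then 1 else 0) - 1) * psi v
  - (WN B f (2 * n) psi v - W B f psi v).
Proof.
  intros Hn. unfold LN, L. rewrite degN_fmass, deg_fmass by auto.
  destruct (in_trunc (2 * n) v) eqn:E; [ring|]. unfold WN at 1. rewrite E. ring.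
Qed.

Section Tail.
Variables (psi : pt -> R) (n : nat) (tau : R).
Hypothesis n_large : (K < n)%nat.
Hypothesis tail_small : forall M, tailsum psi (Z.of_nat n - 2 * Z.of_nat K) M <= tau.

Lemma defect_column_le w M : In w (box K) -> lsum (box M) (fun v => defect_bound n psi v w) <= 4 * tau.
Proof.
  intros Hw.
  pose proof (wrapped_column_le n psi w M n_large Hw).
  pose proof (shifted_column_le n psi w M Hw).
  pose proof (tail_small n). pose proof (tail_small (M + K)%nat).
  rewrite (lsum_ext _ _ (fun v =>
     2 * (if (negb (interior n v) && in_trunc (2 * n) v)%bool
          then psi (wrap (Z.of_nat n) (ptadd v w)) ^ 2 else 0)
     + 2 * (if negb (interior n v) then psi (ptadd v w) ^ 2 else 0))).
  - rewrite lsum_add, !lsum_scal. lra.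
  - intros v _. unfold defect_bound.
    destruct (interior n v), (in_trunc (2 * n) v); simpl; ring.
Qed.

Lemma WN_sub_W_bound M :
  boxsum M (fun v => (WN B f (2 * n) psi v - W B f psi v) ^ 2) <= 4 * fmass ^ 2 * tau.
Proof.
  apply Rle_trans with
    (lsum (box M) (fun v => fmass * lsum (box K) (fun w => f (lat_norm2 B w) * defect_bound n psi v w))).
  { apply lsum_le. intros v _. rewrite WN_sub_W by auto.
    eapply Rle_trans; [apply lsum_Cauchy_Schwarz; auto|].
    apply Rmult_le_compat_l; [apply fmass_nonneg|].
    apply lsum_le. intros w Hw. apply Rmult_le_compat_l; auto. apply wrap_defect_sq_le; auto. }
  rewrite lsum_scal, lsum_exchange.
  apply Rle_trans with (fmass * lsum (box K) (fun w => 4 * tau * f (lat_norm2 B w))).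
  { apply Rmult_le_compat_l; [apply fmass_nonneg|]. apply lsum_le. intros w Hw.
    rewrite lsum_scal, Rmult_comm. apply Rmult_le_compat_r; auto. apply defect_column_le; auto. }
  rewrite lsum_scal. unfold fmass. right; ring.
Qed.

Lemma LN_sub_L_bound M :
  boxsum M (fun v => (LN B f (2 * n) psi v - L B f psi v) ^ 2) <= 10 * fmass ^ 2 * tau.
Proof.
  pose proof (WN_sub_W_bound M) as HW.
  apply Rle_trans with (lsum (box M) (fun v =>
     2 * fmass ^ 2 * (if in_trunc (2 * n) v then 0 else psi v ^ 2)
     + 2 * (WN B f (2 * n) psi v - W B f psi v) ^ 2)).
  { apply lsum_le. intros v _. rewrite LN_sub_L by auto.
    eapply Rle_trans; [apply sq_sub_le|].
    destruct (in_trunc (2 * n) v); right; ring. }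
  rewrite lsum_add, !lsum_scal.
  assert (Hout : lsum (box M) (fun v => if in_trunc (2 * n) v then 0 else psi v ^ 2) <= tau).
  { eapply Rle_trans; [|apply (tail_small M)]. apply lsum_le. intros v _.
    destruct (in_trunc (2 * n) v) eqn:E.
    - destruct (far _ v); [apply pow2_ge_0 | lra].
    - assert (Hfar : far (Z.of_nat n - 2 * Z.of_nat K) v = true); [|rewrite Hfar; lra].
      apply farP. assert (~ in_cell n v) by (rewrite <- in_truncP; congruence).
      unfold in_cell in *. lia. }
  change (lsum (box M) (fun v => (WN B f (2 * n) psi v - W B f psi v) ^ 2)
          <= 4 * fmass ^ 2 * tau) in HW.
  assert (fmass ^ 2 * lsum (box M) (fun v => if in_trunc (2 * n) v then 0 else psi v ^ 2)
          <= fmass ^ 2 * tau) by (apply Rmult_le_compat_l; [apply pow2_ge_0 | auto]).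
  lra.
Qed.
End Tail.
End Convergence.

Theorem proposition4p4 (B : mat2) (f : R -> R)
  (hB : det2 B <> 0)
  (hf_nonneg : forall x : R, 0 <= f x)
  (hf_supp : exists Rs : R, forall x : R, Rs < Rabs x -> f x = 0)
  (hf0 : f 0 = 0)
  (hf_sum : ex_finite_lim_seq
     (fun M => boxsum M (fun u => if zz_eqb u (0%Z, 0%Z) then 0 else f (lat_norm2 B u)))) :
  strong_conv_even (WN B f) (W B f) /\ strong_conv_even (LN B f) (L B f).
Proof.
  destruct hf_supp as [Rs HRs].
  set (R1 := Rabs Rs + 1).
  assert (f_vanish : forall y, R1 <= y -> f y = 0).
  { intros y Hy. apply HRs. unfold R1 in Hy. pose proof (Rle_abs y). pose proof (Rle_abs Rs). lra. }
  destruct (lat_norm2_le_box B R1 hB) as [K short_in_box].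
  split.
  - apply (strong_conv_even_of_tail_bound _ _ K (4 * fmass B f K ^ 2));
      [apply Rmult_le_pos; [lra | apply pow2_ge_0] |].
    intros psi n tau Hn Htail. apply (WN_sub_W_bound B f R1 K); auto.
  - apply (strong_conv_even_of_tail_bound _ _ K (10 * fmass B f K ^ 2));
      [apply Rmult_le_pos; [lra | apply pow2_ge_0] |].
    intros psi n tau Hn Htail. apply (LN_sub_L_bound B f R1 K); auto.
Qed.
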